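(* Let $I$ be a binary, friendship-uniform instance with common friendship value $\phi<1$ whose friendship graph $(N,F^* )$ has maximum degree $1$, and let $A$ be the (random) allocation output by FF-CT-RSD$^*$ on $I$ when all agents report their friendships truthfully and choose plots to maximize their utility. Then $\mathbb E(\mathrm{SW}(A))\ge\frac{\phi}{4\phi+4}\,\mathrm{OPT}(I)$.
   Context: Instance: agents $N$, $n=|N|$ plots $\mathcal V$, undirected plot graph $(\mathcal V,\mathcal E)$, binary valuations $u_i:\mathcal V\to\{0,1\}$, reciprocal friendship relation $F$ with $\phi_{i,j}=\phi>0$ for all $(i,j)\in F$; $F^*=\{\{i,j\}:(i,j)\in F\}$. For a bijection $A:N\to\mathcal V$, $U_i(A)=u_i(A(i))+\sum_{(i,j)\in F}\phi\,\mathbb I(\{A(i),A(j)\}\in\mathcal E)$, $\mathrm{SW}(A)=\sum_iU_i(A)$, $\mathrm{OPT}(I)=\max_A\mathrm{SW}(A)$. RSD$^*$: in each iteration, remaining agents report whether they value some available plot positively; if some do, one of them chosen uniformly at random picks a plot; otherwise remaining agents are arbitrarily paired with remaining plots and the procedure stops. FF-CT-RSD$^*$: each agent reports a friend (or none); let $P$ be the set of pairs $\{i,j\}$ who report each other. While some pair of adjacent plots is unoccupied and $P\ne\emptyset$, a uniformly random pair $\{i,j\}$ is removed from $P$ and $i,j$ pick plots consecutively in random order. Afterwards RSD$^*$ is run on the remaining agents and plots. Expectation is over the mechanism's randomness. *)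

From HB Require Import structures.
From mathcomp Require Import all_boot all_order all_algebra.
Set Implicit Arguments. Unset Strict Implicit. Unset Printing Implicit Defensive.
Import Order.TTheory GRing.Theory Num.Theory.
Local Open Scope ring_scope.

Section Mechanism.
Variables (R : realFieldType) (N V : finType).
Variable E : rel V.                 (* plot graph *)
Variable u : N -> V -> bool.
Variable F : rel N.
Variable phi : R.

Definition utility (i : N) (A : {ffun N -> V}) : R :=
  (u i (A i))%:R + \sum_(j | F i j && E (A i) (A j)) phi.

Definition SW (A : {ffun N -> V}) : R := \sum_(i : N) utility i A.

(* optimum over bijections (#|N| = #|V| is assumed in the theorem) *)
Definition OPT : R := \big[Num.max/0]_(A : {ffun N -> V} | injectiveb A) SW A.

(* state of the mechanism: partial allocation, remaining mutual-report pairs,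
   agent about to pick (if any), agent to pick right after (second of a pair) *)
Record state := MkState {
  alloc : {ffun N -> option V};
  pairs : {set {set N}};
  cur : option N;
  nxt : option N }.

Definition free (s : state) (v : V) : bool := [forall k, alloc s k != Some v].
Definition unplaced (s : state) (i : N) : bool := alloc s i == None.

Definition partial_inj (a : {ffun N -> option V}) : Prop :=
  forall i j v, a i = Some v -> a j = Some v -> i = j.

Definition wf_state (s : state) : Prop :=
  partial_inj (alloc s) /\
  (forall i, cur s = Some i -> unplaced s i) /\
  (forall j, nxt s = Some j -> unplaced s j /\ cur s <> Some j).

(* FF phase continues: some pair of (distinct) adjacent plots is unoccupied
   and P is nonempty *)
Definition ff_cond (s : state) : bool :=
  (pairs s != set0) &&
  [exists v, exists w, [&& v != w, E v w, free s v & free s w]].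

Definition rsd_set (s : state) : {set N} :=
  [set i | unplaced s i & [exists v, free s v && u i v]].

Definition pick_step (s : state) (v : V) : state :=
  MkState [ffun k => if cur s == Some k then Some v else alloc s k]
          (pairs s) (nxt s) None.

Definition draw_step (s : state) (p : {set N}) (i : N) : state :=
  MkState (alloc s) (pairs s :\ p) (Some i) [pick j in p :\ i].

(* truthful reports: P = F^* *)
Definition init_state : state :=
  MkState [ffun _ => None] [set [set x.1; x.2] | x : N * N & F x.1 x.2] None None.

Variable compl : state -> {ffun N -> V}.   (* arbitrary final pairing *)
Variable strat : state -> V.

Fixpoint eval (k : nat) (s : state) (g : {ffun N -> V} -> R) : R :=
  match k with
  | 0 => g (compl s)
  | k'.+1 =>
    match cur s with
    | Some _ => eval k' (pick_step s (strat s)) g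
    | None =>
      if ff_cond s then
        (#|pairs s|%:R)^-1 *
          \sum_(p in pairs s) ((#|p|%:R)^-1 * \sum_(i in p) eval k' (draw_step s p i) g)
      else if rsd_set s == set0 then g (compl s)
      else (#|rsd_set s|%:R)^-1 *
             \sum_(i in rsd_set s) eval k' (MkState (alloc s) (pairs s) (Some i) None) g
    end
  end.

(* enough fuel: every agent is placed within two steps *)
Definition fuel : nat := (3 * #|N|).+1.

Definition expect (s : state) (g : {ffun N -> V} -> R) : R := eval fuel s g.

End Mechanism.


Definition valid_completion (N V : finType) (compl : state N V -> {ffun N -> V}) : Prop :=
  forall s, partial_inj (alloc s) ->
    injectiveb (compl s) /\ (forall i v, alloc s i = Some v -> compl s i = v).

Definition spe (R : realFieldType) (N V : finType) (E : rel V) (u : N -> V -> bool)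
    (F : rel N) (phi : R) (compl : state N V -> {ffun N -> V})
    (strat : state N V -> V) : Prop :=
  forall s i, wf_state s -> cur s = Some i -> (exists v, free s v) ->
    free s (strat s) /\
    forall v, free s v ->
      expect E u compl strat (pick_step s v) (utility E u F phi i) <=
      expect E u compl strat (pick_step s (strat s)) (utility E u F phi i).

(* Proof idea: a potential argument.  For a state s of the mechanism let
     Phi(s) = W(s) + c * (U(s) + 2 phi M(s)),   c = phi / (4 phi + 4),
   where W(s) [secured_welfare] is the welfare already secured by the placed
   agents, U(s) [value_capacity] is the largest number of waiting agents that a
   bijection can send to free plots they value, and M(s) [friend_capacity] is
   the minimum of the number of remaining mutual pairs and of the size of a
   matching of free adjacent plots.  Initially W = 0 and OPT <= U + 2 phi M: in
   any allocation at most U agents get a valued plot, and each orientation of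
   the realized friendship edges consists of distinct pairs whose plots form a
   matching.  Backward induction along the mechanism gives Phi(s) <= E[SW | s].
   An RSD pick secures 1 (as phi < 1, the picker takes a plot it values) and
   lowers U by at most 2, and 2 c <= 1.  In a friendship round U drops by at
   most 4 and M by at most 2, while the best-responding pair secures
   phi = c (4 + 4 phi) in each order of play; the only exception is a contested
   first pick, where U and M drop by at most 2 and 1 and the other order
   secures 1. *)

From Pilot Require Import Defs.
From HB Require Import structures.
From mathcomp Require Import all_boot all_order all_algebra.
From mathcomp Require Import zify ring lra.
Import Order.TTheory GRing.Theory Num.Theory.
Set Implicit Arguments. Unset Strict Implicit. Unset Printing Implicit Defensive.
Local Open Scope ring_scope.

Lemma avg_const (R : numFieldType) (T : finType) (S : {set T}) (c : R) :
  S != set0 -> (#|S|%:R)^-1 * \sum_(x in S) c = c.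
Proof.
move=> hS; have hS' : (#|S|%:R : R) != 0 by rewrite pnatr_eq0 -lt0n card_gt0.
by rewrite sumr_const -(mulr_natl c) mulrA mulVf // mul1r.
Qed.

Lemma avg_ge (R : numFieldType) (T : finType) (S : {set T}) (f : T -> R) lo :
  S != set0 -> (forall x, x \in S -> lo <= f x) ->
  lo <= (#|S|%:R)^-1 * \sum_(x in S) f x.
Proof.
move=> hS h; rewrite -{1}(avg_const lo hS).
by apply: ler_wpM2l; [rewrite invr_ge0 ler0n | apply: ler_sum].
Qed.

Lemma avg_le (R : numFieldType) (T : finType) (S : {set T}) (f : T -> R) hi :
  S != set0 -> (forall x, x \in S -> f x <= hi) ->
  (#|S|%:R)^-1 * \sum_(x in S) f x <= hi.
Proof.
move=> hS h; rewrite -[X in _ <= X](avg_const hi hS).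
by apply: ler_wpM2l; [rewrite invr_ge0 ler0n | apply: ler_sum].
Qed.

Lemma avg_between (R : numFieldType) (T : finType) (S : {set T}) (f : T -> R) lo hi :
  S != set0 -> (forall x, x \in S -> lo <= f x <= hi) ->
  lo <= (#|S|%:R)^-1 * \sum_(x in S) f x <= hi.
Proof. by move=> hS h; rewrite avg_ge ?avg_le // => x /h /andP[]. Qed.

Lemma natr_sum_bool (R : pzSemiRingType) (T : finType) (b : T -> bool) :
  \sum_i ((b i : nat)%:R : R) = (#|[set i | b i]|)%:R.
Proof.
rewrite -natr_sum -sum1_card [in RHS]big_mkcond /=; congr (_%:R).
by apply: eq_bigr => i _; rewrite inE; case: (b i).
Qed.

Lemma ler_pair_average (R : realFieldType) (G G2 G3 Q Q2 Q3 g2 g3 delta : R) :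
  G + g2 <= G2 -> G + g3 <= G3 -> Q <= Q2 + delta -> Q <= Q3 + delta ->
  2 * delta <= g2 + g3 -> 2 * (G + Q) <= (G2 + Q2) + (G3 + Q3).
Proof. lra. Qed.

Lemma ler_mean2 (R : realFieldType) (P x y X Y : R) :
  2 * P <= x + y -> x <= X -> y <= Y -> P <= 2^-1 * (X + Y).
Proof. by move=> h hx hy; rewrite ler_pdivlMl ?ltr0n //; lra. Qed.

Section FFCTRSD.
Variables (R : realFieldType) (N V : finType) (E : rel V) (u : N -> V -> bool)
  (F : rel N) (phi : R).
Hypotheses (hNV : #|N| = #|V|) (hEsym : symmetric E) (hFsym : symmetric F)
  (hFirr : irreflexive F) (hdeg : forall i : N, (#|[set j | F i j]| <= 1)%N)
  (hphi0 : 0 < phi) (hphi1 : phi < 1).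
Variables (compl : state N V -> {ffun N -> V}) (strat : state N V -> V).
Hypotheses (hcompl : valid_completion compl) (hstrat : spe E u F phi compl strat).

Local Notation st := (state N V).
Local Notation ev := (@eval R N V E u compl strat).
Local Notation free := (@Defs.free N V).
Local Notation Ut := (utility E u F phi).
Local Notation SW := (SW E u F phi).

Lemma friend_neq a b : F a b -> a != b.
Proof. by move=> h; apply/eqP => e; move: h; rewrite e hFirr. Qed.

Lemma friendE a b : F a b -> forall j, F a j = (j == b).
Proof.
move=> hab j; apply/idP/eqP => [haj|->//].
apply/eqP; apply/negPn/negP => hjb.
have : (#|[set j; b]| <= #|[set j0 | F a j0]|)%N.
  by apply: subset_leq_card; apply/subsetP => z; rewrite !inE => /orP[]/eqP->.
by rewrite cards2 hjb; have := hdeg a; lia.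
Qed.

Definition friend_pairs : {set {set N}} := pairs (init_state V F).

Lemma friend_pairsP p : p \in friend_pairs -> exists a b, [/\ F a b, a != b & p = [set a; b]].
Proof.
case/imsetP => -[a b]; rewrite inE /= => hab ->.
by exists a, b; split => //; exact: friend_neq.
Qed.

Lemma friend_pairs_mem p k : p \in friend_pairs -> k \in p -> exists b, F k b /\ p = [set k; b].
Proof.
case/friend_pairsP => a [b [hab _ ->]]; rewrite !inE => /orP[]/eqP->.
  by exists b.
by exists a; rewrite hFsym setUC.
Qed.

Lemma friend_pairs_disj p q k : p \in friend_pairs -> q \in friend_pairs ->
  k \in p -> k \in q -> p = q.
Proof.
move=> hp hq kp kq.
case: (friend_pairs_mem hp kp) => b [hb ->]; case: (friend_pairs_mem hq kq) => b' [hb' ->].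
by move: hb'; rewrite (friendE hb) => /eqP->.
Qed.

Definition free_edge (s : st) : bool :=
  [exists v, exists w, [&& v != w, E v w, free s v & free s w]].

Definition pairs_unplaced (s : st) : Prop :=
  forall p, p \in pairs s -> forall k, k \in p ->
  [/\ alloc s k = None, cur s <> Some k & nxt s <> Some k].

(* Once the friendship phase is over, the leftover pairs are irrelevant; before
   that, the members of every remaining pair are still waiting. *)
Definition invariant (s : st) : Prop :=
  [/\ partial_inj (alloc s), pairs s \subset friend_pairs,
      (forall i, cur s = Some i -> alloc s i = None),
      (forall j, nxt s = Some j -> alloc s j = None /\ cur s <> Some j)
    & ~~ free_edge s \/ pairs_unplaced s].

Lemma invariant_wf s : invariant s -> wf_state s.
Proof.
case=> h1 _ h3 h4 _; split => //; split.
  by move=> i /h3; rewrite /unplaced => ->.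
by move=> j /h4 [h5 h6]; rewrite /unplaced h5.
Qed.

Lemma invariant_init : invariant (init_state V F).
Proof.
split => //=; first by move=> i j v; rewrite ffunE.
by right => p hp k hk; split => //; rewrite ffunE.
Qed.

Lemma invariant_cur s i : invariant s -> cur s = Some i -> alloc s i = None.
Proof. by case=> _ _ h _ _; exact: h. Qed.

Lemma invariant_pairs s p : invariant s -> p \in pairs s -> p \in friend_pairs.
Proof. by case=> _ hP _ _ _; exact: (subsetP hP). Qed.

Lemma invariant_pairs_unplaced s : invariant s -> free_edge s -> pairs_unplaced s.
Proof. by case=> _ _ _ _ [] // /negP. Qed.

Lemma alloc_pick (s : st) i v k : cur s = Some i ->
  alloc (pick_step s v) k = if k == i then Some v else alloc s k.
Proof.
move=> hc; rewrite /= ffunE hc.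
by case: (eqVneq k i) => [->|ne]; rewrite ?eqxx //; case: eqP => // -[e]; rewrite e eqxx in ne.
Qed.

Lemma free_pick (s : st) i v w : cur s = Some i -> alloc s i = None ->
  free (pick_step s v) w = free s w && (w != v).
Proof.
move=> hc hi; apply/forallP/andP => [h|[/forallP h1 h2] k].
  split; last by have := h i; rewrite (alloc_pick _ _ hc) eqxx; apply: contra => /eqP->.
  apply/forallP => k; have := h k; rewrite (alloc_pick _ _ hc).
  by case: (eqVneq k i) => [->|//]; rewrite hi.
rewrite (alloc_pick _ _ hc); case: (eqVneq k i) => _; last exact: h1.
by apply: contra h2 => /eqP[->].
Qed.

Lemma invariant_pick (s : st) i v : invariant s -> cur s = Some i -> free s v ->
  invariant (pick_step s v).
Proof.
case=> hinj hP hcur hnxt hdis hc hv; have hi := hcur i hc.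
split => //.
- move=> i1 i2 w; rewrite !(alloc_pick _ _ hc).
  case: (eqVneq i1 i) => [->|n1]; case: (eqVneq i2 i) => [->|n2] //.
  + by move=> [<-] h2; move/forallP: hv => /(_ i2); rewrite h2 eqxx.
  + by move=> h1 [e]; move/forallP: hv => /(_ i1); rewrite h1 e eqxx.
  + exact: hinj.
- move=> j /= hj; have [h1 h2] := hnxt j hj; rewrite (alloc_pick _ _ hc).
  by case: (eqVneq j i) => // e; subst; rewrite hc in h2.
- case: hdis => [hn|hok]; [left|right].
  + apply: contra hn => /existsP[v1 /existsP[w1 /and4P[a1 a2 a3 a4]]].
    apply/existsP; exists v1; apply/existsP; exists w1.
    by rewrite a1 a2 /=; move: a3 a4; rewrite !(free_pick _ _ hc hi) => /andP[->_]/andP[->_].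
  + move=> p hp k hk; have [h1 h2 h3] := hok p hp k hk; split => //=.
    by rewrite (alloc_pick _ _ hc); case: (eqVneq k i) => // e; subst; rewrite hc in h2.
Qed.

Lemma invariant_draw (s : st) p i : invariant s -> cur s = None -> ff_cond E s ->
  p \in pairs s -> i \in p -> invariant (draw_step s p i).
Proof.
move=> hI hc /andP[_ hex] hp hi; have hok := invariant_pairs_unplaced hI hex.
case: hI => hinj hP hcur hnxt _.
have hpP : p \in friend_pairs by apply: (subsetP hP).
split => //=.
- exact: subset_trans (subsetDl _ _) hP.
- by move=> i0 [<-]; case: (hok p hp i hi).
- move=> j; case: pickP => // j0; rewrite !inE => /andP[ne hj] [<-].
  by split; [case: (hok p hp j0 hj) | move=> [e]; rewrite e eqxx in ne].
- right => q; rewrite !inE => /andP[nqp hq] k hk.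
  have hqP : q \in friend_pairs by apply: (subsetP hP).
  have [h1 _ _] := hok q hq k hk; split => //=.
  + by move=> [e]; subst; rewrite (friend_pairs_disj hqP hpP hk hi) eqxx in nqp.
  + case: pickP => // j0; rewrite !inE => /andP[_ hj] [e]; subst.
    by rewrite (friend_pairs_disj hqP hpP hk hj) eqxx in nqp.
Qed.

Definition rsd_draw (s : st) (i : N) : st := MkState (alloc s) (pairs s) (Some i) None.

Lemma invariant_rsd (s : st) i : invariant s -> cur s = None -> ~~ ff_cond E s ->
  i \in rsd_set u s -> invariant (rsd_draw s i).
Proof.
case=> hinj hP hcur hnxt _ hc hff; rewrite inE => /andP[/eqP hi _].
split => //= [i0 [<-] //|].
case: (eqVneq (pairs s) set0) => [e|ne]; last by left; rewrite /ff_cond ne in hff.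
by right => p /=; rewrite e inE.
Qed.

Lemma invariant_free_plot (s : st) i : invariant s -> cur s = Some i -> exists v, free s v.
Proof.
case=> _ _ hcur _ _ hc; have hi := hcur i hc.
case: (boolP [exists v, free s v]) => [/existsP//|]; rewrite negb_exists => /forallP hall.
pose placed := [set k | alloc s k != None].
have h1 : (#|placed| < #|N|)%N.
  rewrite -cardsT; apply: proper_card; rewrite properT.
  by apply/eqP => e; have := in_setT i; rewrite -e inE hi.
have h2 : (#|V| <= #|placed|)%N.
  have -> : #|V| = #|[set Some v | v in [set: V]]|.
    by rewrite card_imset ?cardsT //; move=> ? ? [].
  apply: leq_trans (leq_imset_card (fun k => alloc s k) _).
  apply: subset_leq_card; apply/subsetP => ov /imsetP[v _ ->].
  have := hall v; rewrite negb_forall => /existsP[k]; rewrite negbK => /eqP hk.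
  by apply/imsetP; exists k; rewrite ?inE ?hk.
by move: h1 h2; rewrite hNV; lia.
Qed.

Definition extends (a : {ffun N -> option V}) (A : {ffun N -> V}) : Prop :=
  forall i v, a i = Some v -> A i = v.

Lemma eval_cur (k : nat) (s : st) g i : cur s = Some i ->
  ev k.+1 s g = ev k (pick_step s (strat s)) g.
Proof. by move=> hc; rewrite /= hc. Qed.

Lemma strat_free (s : st) i : invariant s -> cur s = Some i -> free s (strat s).
Proof. by move=> hI hc; have [] := hstrat (invariant_wf hI) hc (invariant_free_plot hI hc). Qed.

Lemma invariant_pick_strat (s : st) i : invariant s -> cur s = Some i ->
  invariant (pick_step s (strat s)).
Proof. by move=> hI hc; exact: invariant_pick hI hc (strat_free hI hc). Qed.

Lemma invariant_partial_inj (s : st) : invariant s -> partial_inj (alloc s).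
Proof. by case. Qed.

Lemma eval_bounds (k : nat) (s : st) (g : {ffun N -> V} -> R) (lo hi : R) : invariant s ->
  (forall A : {ffun N -> V}, injectiveb A -> extends (alloc s) A -> lo <= g A <= hi) ->
  lo <= ev k s g <= hi.
Proof.
elim: k s g => [|k IH] s g hI hg.
  by have [h1 h2] := hcompl (invariant_partial_inj hI); exact: hg.
case hc: (cur s) => [i|].
  have hcur := invariant_cur hI hc.
  rewrite (eval_cur _ _ hc); apply: IH; first exact: invariant_pick_strat hI hc.
  move=> A hA hext; apply: hg => // j w hj; apply: hext.
  by rewrite (alloc_pick _ _ hc); case: eqVneq => // e; subst; rewrite hcur in hj.
rewrite /= hc; case hff: (ff_cond E s).
  apply: avg_between; first by case/andP: hff.
  move=> p hp; have [a [b [_ _ hpe]]] := friend_pairsP (invariant_pairs hI hp).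
  apply: avg_between; first by apply/set0Pn; exists a; rewrite hpe !inE eqxx.
  by move=> j hj; apply: IH; [exact: invariant_draw | move=> A hA hext; apply: hg].
case: ifP => hr.
  by have [h1 h2] := hcompl (invariant_partial_inj hI); exact: hg.
apply: avg_between; first by rewrite hr.
by move=> j hj; apply: IH; [apply: invariant_rsd; rewrite ?hff | move=> A hA hext; apply: hg].
Qed.

Lemma eval_const (k : nat) (s : st) (g : {ffun N -> V} -> R) (c : R) : invariant s ->
  (forall A : {ffun N -> V}, injectiveb A -> extends (alloc s) A -> g A = c) -> ev k s g = c.
Proof.
move=> hI h; have /andP[h1 h2] : c <= ev k s g <= c.
  by apply: (eval_bounds k hI) => A hA hx; rewrite (h A hA hx) lexx.
by apply/eqP; rewrite eq_le h1 h2.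
Qed.

Definition bonus (c : bool) : R := if c then phi else 0.

Lemma bonus_ge0 c : 0 <= bonus c.
Proof. by case: c => //=; exact: ltW. Qed.

Lemma bonus_le c : bonus c <= phi.
Proof. by case: c => //=; exact: ltW. Qed.

Lemma utility_friend a b (A : {ffun N -> V}) : F a b ->
  Ut a A = (u a (A a))%:R + bonus (E (A a) (A b)).
Proof.
move=> hab; rewrite /utility; congr (_ + _).
rewrite (eq_bigl (fun j => (j == b) && E (A a) (A b))); last first.
  by move=> j; rewrite (friendE hab); case: eqVneq => // ->.
case: (E (A a) (A b)).
  by rewrite (big_pred1 b) // => j; rewrite andbT.
by rewrite big_pred0 // => j; rewrite andbF.
Qed.

Lemma utility_ge i (A : {ffun N -> V}) : (u i (A i))%:R <= Ut i A.
Proof. by rewrite /utility lerDl; apply: sumr_ge0 => *; exact: ltW. Qed.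

Lemma utility_le i (A : {ffun N -> V}) : Ut i A <= (u i (A i))%:R + phi.
Proof.
rewrite /utility lerD2l; apply: (@le_trans _ _ (\sum_(j | F i j) phi)).
  rewrite [X in X <= _]big_mkcondr /=; apply: ler_sum => j _.
  by case: E => //; exact: ltW.
rewrite sumr_const.
have : (#|[pred j | F i j]| <= 1)%N.
  by have := hdeg i; rewrite (eq_card (B := [pred j | F i j])) // => j; rewrite inE.
by case: #|_| => [|[|//]] _; rewrite ?mulr0n ?mulr1n //; exact: ltW.
Qed.

Lemma eval_second_pick (k : nat) (t : st) a b v w : invariant t -> cur t = Some b ->
  alloc t a = Some v -> F b a -> free t w ->
  ev k (pick_step t w) (Ut b) = (u b w)%:R + bonus (E w v).
Proof.
move=> hI hc ha hba hw; apply: eval_const; first exact: invariant_pick hI hc hw.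
move=> A hA hext; rewrite (utility_friend _ hba).
have hb := invariant_cur hI hc.
have -> : A b = w by apply: hext; rewrite (alloc_pick _ _ hc) eqxx.
have -> // : A a = v.
by apply: hext; rewrite (alloc_pick _ _ hc); case: eqVneq => // e; subst; rewrite hb in ha.
Qed.

Lemma eval_first_pick (k : nat) (d : st) a b v : invariant d -> cur d = Some a -> nxt d = Some b ->
  F a b -> free d v ->
  ev k.+1 (pick_step d v) (Ut a) =
  (u a v)%:R + bonus (E v (strat (pick_step d v))).
Proof.
move=> hI hc hn hab hv.
set s1 := pick_step d v.
have c1 : cur s1 = Some b by [].
have hI1 : invariant s1 by apply: invariant_pick hI hc hv.
rewrite (eval_cur _ _ c1); apply: eval_const; first exact: invariant_pick_strat hI1 c1.
move=> A hA hext; rewrite (utility_friend _ hab).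
have -> : A b = strat s1 by apply: hext; rewrite (alloc_pick _ _ c1) eqxx.
have -> // : A a = v.
by apply: hext; rewrite (alloc_pick _ _ c1) (negbTE (friend_neq hab)) (alloc_pick _ _ hc) eqxx.
Qed.

Definition secured (a : {ffun N -> option V}) (k : N) : R :=
  if a k is Some v then
    (u k v)%:R + \sum_(j | F k j) (if a j is Some w then bonus (E v w) else 0)
  else 0.

Definition secured_welfare (a : {ffun N -> option V}) : R := \sum_k secured a k.

Definition sub_alloc (a a' : {ffun N -> option V}) : Prop :=
  forall k v, a k = Some v -> a' k = Some v.

Lemma secured_ge0 a k : 0 <= secured a k.
Proof.
rewrite /secured; case: (a k) => // v; rewrite addr_ge0 ?ler0n //.
by apply: sumr_ge0 => j _; case: (a j) => // w; exact: bonus_ge0.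
Qed.

Lemma secured_mono a a' k : sub_alloc a a' -> secured a k <= secured a' k.
Proof.
move=> h; rewrite {1}/secured; case hk: (a k) => [v|]; last exact: secured_ge0.
rewrite /secured (h k v hk) lerD2l; apply: ler_sum => j _.
case hj: (a j) => [w|]; first by rewrite (h j w hj).
by case: (a' j) => // *; exact: bonus_ge0.
Qed.

Lemma secured_welfare_grow a a' : sub_alloc a a' ->
  secured_welfare a + \sum_(k | a k == None) secured a' k <= secured_welfare a'.
Proof.
move=> h; rewrite /secured_welfare [X in _ <= X](bigID (fun k => a k == None)) /=.
rewrite [\sum_k secured a k](bigID (fun k => a k == None)) /=.
rewrite [\sum_(k | a k == None) secured a k]big1 ?add0r; last first.
  by move=> k /eqP hk; rewrite /secured hk.
by rewrite addrC lerD2r; apply: ler_sum => k _; exact: secured_mono.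
Qed.

Lemma secured_welfare_le_SW a A : extends a A -> secured_welfare a <= SW A.
Proof.
move=> h; apply: ler_sum => k _; rewrite /utility /secured.
case hk: (a k) => [v|]; last by rewrite addr_ge0 ?ler0n ?sumr_ge0 // => *; exact: ltW.
rewrite (h k v hk) lerD2l big_mkcondr /=; apply: ler_sum => j _.
case hj: (a j) => [w|]; first by rewrite (h j w hj).
by case: E => //; exact: ltW.
Qed.

Lemma secured_friend (a : {ffun N -> option V}) i j x y : F i j -> a i = Some x ->
  a j = Some y -> secured a i = (u i x)%:R + bonus (E x y).
Proof.
move=> hij hi hj; rewrite /secured hi; congr (_ + _).
by rewrite (big_pred1 j) ?hj // => k; rewrite /= (friendE hij).
Qed.

Lemma secured_ge_value (a : {ffun N -> option V}) i x : a i = Some x -> (u i x)%:R <= secured a i.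
Proof.
move=> h; rewrite /secured h lerDl; apply: sumr_ge0 => j _.
by case: (a j) => // w; exact: bonus_ge0.
Qed.

Definition valued_free (s : st) (A : {ffun N -> V}) (k : N) : bool :=
  (alloc s k == None) && free s (A k) && u k (A k).

Definition value_capacity (s : st) : nat :=
  \max_(A : {ffun N -> V} | injectiveb A) #|[set k | valued_free s A k]|.

Lemma value_capacity_drop (s s' : st) (X : {set N}) (W : {set V}) m :
  (forall k, k \notin X -> alloc s' k = alloc s k) ->
  (forall v, v \notin W -> free s v -> free s' v) ->
  (forall A : {ffun N -> V}, injective A ->
     (#|[set k in X | valued_free s A k && (A k \notin W)]| <= m)%N) ->
  (value_capacity s <= value_capacity s' + m + #|W|)%N.
Proof.
move=> hX hW hm; apply/bigmax_leqP => A /injectiveP hA.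
have h1 : (#|[set k | valued_free s' A k]| <= value_capacity s')%N.
  by apply: leq_bigmax_cond; apply/injectiveP.
set Xb := [set k in X | valued_free s A k && (A k \notin W)].
have h2 : (#|A @^-1: W| <= #|W|)%N.
  rewrite -(card_imset _ hA); apply: subset_leq_card; apply/subsetP => v.
  by case/imsetP => k; rewrite inE => hk ->.
have h3 : (#|[set k | valued_free s A k]| <=
           #|[set k | valued_free s' A k] :|: Xb :|: A @^-1: W|)%N.
  apply: subset_leq_card; apply/subsetP => k; rewrite inE => hk; rewrite /Xb !inE.
  case: (boolP (A k \in W)) => hw; first by rewrite orbT.
  case: (boolP (k \in X)) => hkx; first by rewrite hk /= orbT.
  move: hk; rewrite /valued_free (hX k hkx) => /andP[/andP[-> hf] ->].
  by rewrite (hW _ hw hf).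
have h4 := (leq_card_setU ([set k | valued_free s' A k] :|: Xb) (A @^-1: W)).1.
have h5 := (leq_card_setU [set k | valued_free s' A k] Xb).1.
have h6 : (#|Xb| <= m)%N := hm A hA.
by clearbody Xb; lia.
Qed.

Lemma value_capacity0 (s : st) : rsd_set u s = set0 -> value_capacity s = 0%N.
Proof.
move=> h; apply/eqP; rewrite -leqn0; apply/bigmax_leqP => A _.
rewrite leqn0 cards_eq0; apply/eqP/setP => k; rewrite in_set0 inE.
apply/negbTE/negP => /andP[/andP[hk hf] hu].
have : k \in rsd_set u s.
  by rewrite inE /unplaced hk /=; apply/existsP; exists (A k); rewrite hf hu.
by rewrite h inE.
Qed.

Definition free_matching (s : st) (M : {set {set V}}) : bool :=
  [forall e in M, exists v, exists w, [&& v != w, E v w, free s v, free s w & e == [set v; w]]]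
  && [forall e1 in M, forall e2 in M, (e1 != e2) ==> [disjoint e1 & e2]].

Definition matching_number (s : st) : nat :=
  \max_(M : {set {set V}} | free_matching s M) #|M|.

Definition has_free_nb (s : st) (z : V) : bool := [exists w, [&& w != z, E z w & free s w]].

Lemma free_matching_edge s M e : free_matching s M -> e \in M ->
  exists v w, [/\ v != w, E v w, free s v, free s w & e = [set v; w]].
Proof.
case/andP => /forall_inP h _ /h /existsP[v /existsP[w /and5P[h1 h2 h3 h4 /eqP h5]]].
by exists v, w.
Qed.

Lemma free_matching_disj s M e1 e2 z : free_matching s M -> e1 \in M -> e2 \in M ->
  z \in e1 -> z \in e2 -> e1 = e2.
Proof.
case/andP => _ /forall_inP h h1 h2 z1 z2; apply/eqP; apply/negPn/negP => ne.
have := h e1 h1 => /forall_inP /(_ e2 h2); rewrite ne /= => /disjointFr /(_ z1).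
by rewrite z2.
Qed.

Lemma matching_number_drop (s s' : st) x y :
  (forall w, free s' w = free s w && (w != x) && (w != y)) ->
  (matching_number s <= matching_number s' + has_free_nb s x + has_free_nb s y)%N.
Proof.
move=> hf; apply/bigmax_leqP => M hM.
set M' := [set e in M | (x \notin e) && (y \notin e)].
have hM' : free_matching s' M'.
  apply/andP; split.
    apply/forall_inP => e; rewrite inE => /andP[he /andP[hx hy]].
    have [v [w [h1 h2 h3 h4 ev]]] := free_matching_edge hM he; subst e.
    apply/existsP; exists v; apply/existsP; exists w.
    move: hx hy; rewrite !inE !negb_or => /andP[hxv hxw] /andP[hyv hyw].
    by rewrite h1 h2 !hf h3 h4 /= ![v == _]eq_sym ![w == _]eq_sym hxv hxw hyv hyw eqxx.
  apply/forall_inP => e1; rewrite inE => /andP[h1 _].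
  apply/forall_inP => e2; rewrite inE => /andP[h2 _].
  by move: hM => /andP[_ /forall_inP/(_ e1 h1)/forall_inP/(_ e2 h2)].
have c1 : (#|M| <= #|M'| + #|[set e in M | x \in e]| + #|[set e in M | y \in e]|)%N.
  apply: leq_trans (_ : _ <= #|M' :|: [set e in M | x \in e] :|: [set e in M | y \in e]|)%N _.
    apply: subset_leq_card; apply/subsetP => e he; rewrite !inE he /=.
    by case: (x \in e); case: (y \in e).
  by apply: leq_trans (leq_card_setU _ _) _; rewrite leq_add2r; exact: leq_card_setU.
have c2 z : (#|[set e in M | z \in e]| <= has_free_nb s z)%N.
  case: (boolP (has_free_nb s z)) => hz.
    apply/card_le1_eqP => e1 e2; rewrite !inE => /andP[h1 z1] /andP[h2 z2].
    exact: free_matching_disj hM h2 h1 z2 z1.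
  rewrite leqn0 cards_eq0; apply/eqP/setP => e; rewrite !inE.
  apply/negbTE/negP => /andP[he hze]; apply: (negP hz).
  have [v [w [h1 h2 h3 h4 ev]]] := free_matching_edge hM he; subst e.
  move: hze; rewrite !inE => /orP[]/eqP->; apply/existsP.
    by exists w; rewrite eq_sym h1 h2 h4.
  by exists v; rewrite h1 hEsym h2 h3.
have c3 : (#|M'| <= matching_number s')%N by apply: leq_bigmax_cond.
apply: leq_trans c1 _; rewrite -!addnA; apply: leq_add => //.
by apply: leq_add; apply: c2.
Qed.

Lemma matching_number0 (s : st) : ~~ free_edge s -> matching_number s = 0%N.
Proof.
move=> h; apply/eqP; rewrite -leqn0; apply/bigmax_leqP => M hM.
rewrite leqn0 cards_eq0; apply/eqP/setP => e; rewrite inE.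
apply/negbTE/negP => he; apply: (negP h).
have [v [w [h1 h2 h3 h4 _]]] := free_matching_edge hM he.
by apply/existsP; exists v; apply/existsP; exists w; rewrite h1 h2 h3 h4.
Qed.

(* A remaining pair can only realize its friendship on a free edge, and two
   pairs realizing theirs use disjoint edges. *)
Definition friend_capacity (s : st) : nat := minn #|pairs s| (matching_number s).

Lemma friend_capacity0 (s : st) : ~~ ff_cond E s -> friend_capacity s = 0%N.
Proof.
rewrite /ff_cond negb_and negbK => /orP[/eqP e|h].
  by rewrite /friend_capacity e cards0 min0n.
by rewrite /friend_capacity (matching_number0 h) minn0.
Qed.

Definition pair_gain (a b : N) (x y : V) : R :=
  (u a x)%:R + (u b y)%:R + bonus (E x y) + bonus (E y x).

Lemma pair_gain_ge_first a b x y : (u a x)%:R + bonus (E x y) <= pair_gain a b x y.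
Proof.
have := bonus_ge0 (E y x); have : 0 <= ((u b y)%:R : R) by [].
by rewrite /pair_gain; lra.
Qed.

Lemma pair_gain_ge_second a b x y : (u b y)%:R + bonus (E y x) <= pair_gain a b x y.
Proof.
have := bonus_ge0 (E x y); have : 0 <= ((u a x)%:R : R) by [].
by rewrite /pair_gain; lra.
Qed.

Lemma pair_gain_ge0 a b x y : 0 <= pair_gain a b x y.
Proof. by rewrite /pair_gain !addr_ge0 ?ler0n ?bonus_ge0. Qed.

(* The one situation in which a friendship round may secure less than [phi]. *)
Definition contested (f : pred V) (a b : N) (x : V) : Prop :=
  [/\ forall v, f v -> ~~ u a v, u b x, forall w, f w -> u b w -> w = x
    & forall w, f w -> w != x -> ~~ E x w].

(* [f] is the set of free plots, [x] the plot picked by [a], and [y v] the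
   answer of [b] to [a] picking [v]; both are best responses. *)
Section BestResponses.
Variables (f : pred V) (a b : N) (x : V) (y : V -> V).
Hypotheses (fx : f x) (fy : forall v, f v -> f (y v) && (y v != v)).
Hypothesis second_best : forall v w, f v -> f w -> w != v ->
  (u b w)%:R + bonus (E w v) <= (u b (y v))%:R + bonus (E (y v) v).
Hypothesis first_best : forall v, f v ->
  (u a v)%:R + bonus (E v (y v)) <= (u a x)%:R + bonus (E x (y x)).

Lemma first_pick_valued : (exists2 v, f v & u a v) -> u a x.
Proof.
case=> v fv uav; apply/negPn/negP => /negbTE uax.
have := first_best fv; rewrite uav uax mulr1n mulr0n.
have := hphi1; have := bonus_le (E x (y x)); have := bonus_ge0 (E v (y v)); lra.
Qed.

Lemma pair_gain_alternative v0 w0 : v0 != w0 -> E v0 w0 -> f v0 -> f w0 ->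
  phi <= pair_gain a b x (y x) \/ contested f a b x.
Proof.
move=> hvw hE fv0 fw0.
have gA := pair_gain_ge_first a b x (y x); have gB := pair_gain_ge_second a b x (y x).
have hx := bonus_ge0 (E x (y x)); have hy := bonus_ge0 (E (y x) x).
have hphi := hphi1.
case: (boolP [exists v, f v && u a v]) => [/existsP[v /andP[fv uav]]|].
  left; have uax := first_pick_valued (ex_intro2 _ _ v fv uav).
  by move: gA; rewrite uax mulr1n; lra.
move/existsPn => na.
case: (boolP [exists w, [&& f w, w != x & u b w]]) => [/existsP[w /and3P[fw wx ubw]]|].
  left; have := second_best fx fw wx; rewrite ubw mulr1n.
  by have := bonus_ge0 (E w x); lra.
move/existsPn => nb.
case: (boolP [exists w, [&& f w, w != x & E x w]]) => [/existsP[w /and3P[fw wx exw]]|].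
  left; have := second_best fx fw wx; rewrite hEsym exw /=.
  by have : 0 <= ((u b w)%:R : R) by []; lra.
move/existsPn => nx.
have only_x w : f w -> w != x -> ~~ u b w by move=> fw wx; have := nb w; rewrite fw wx.
case: (boolP (u b x)) => ubx.
  right; split => //.
  - by move=> v fv; have := na v; rewrite fv.
  - by move=> w fw hw; apply/eqP; apply: contraTT hw; exact: only_x.
  - by move=> w fw wx; have := nx w; rewrite fw wx.
left.
have nbw w : f w -> ~~ u b w by case: (eqVneq w x) => [->|wx fw]; [rewrite ubx | exact: only_x].
have /andP[fy0 _] := fy fv0.
have := second_best fv0 fw0; rewrite eq_sym hvw => /(_ isT).
rewrite (negbTE (nbw _ fw0)) (negbTE (nbw _ fy0)) (hEsym w0 v0) hE !mulr0n /bonus /=.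
case e1: (E (y v0) v0) => /=; last by have := hphi0; lra.
move=> _; have := first_best fv0; rewrite hEsym e1.
have /negbTE uax : ~~ u a x by have := na x; rewrite fx.
have /negbTE uav0 : ~~ u a v0 by have := na v0; rewrite fv0.
move: gA; rewrite uax uav0 !mulr0n /bonus.
by case: (E x (y x)) => /=; have := hphi0; lra.
Qed.

End BestResponses.

Definition num_unplaced (s : st) : nat := #|[set k | alloc s k == None]|.

Definition first_pick (s : st) (p : {set N}) (a : N) : V := strat (draw_step s p a).

Definition answer (s : st) (p : {set N}) (a : N) (v : V) : V :=
  strat (pick_step (draw_step s p a) v).

Definition after_pair (s : st) (p : {set N}) (a : N) : st :=
  let x := first_pick s p a in pick_step (pick_step (draw_step s p a) x) (answer s p a x).

Record pair_turn (s : st) (p : {set N}) (a b : N) : Prop := PairTurn {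
  turn_invariant : invariant s;
  turn_cur : cur s = None;
  turn_ff : ff_cond E s;
  turn_pairs : p \in pairs s;
  turn_pair : p = [set a; b];
  turn_friends : F a b }.

Lemma pair_turn_sym s p a b : pair_turn s p a b -> pair_turn s p b a.
Proof. by case=> *; split; rewrite // 1?setUC // hFsym. Qed.

Section PairRound.
Variables (s : st) (p : {set N}) (a b : N).
Hypothesis hT : pair_turn s p a b.

Let hI := turn_invariant hT.
Let hc := turn_cur hT.
Let hff := turn_ff hT.
Let hp := turn_pairs hT.
Let hpe := turn_pair hT.
Let hab := turn_friends hT.

Local Notation d := (draw_step s p a).
Local Notation x := (first_pick s p a).
Local Notation y := (answer s p a (first_pick s p a)).

Lemma pair_unplaced : alloc s a = None /\ alloc s b = None.
Proof.
have hok := invariant_pairs_unplaced hI (proj2 (andP hff)).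
have ap : a \in p by rewrite hpe !inE eqxx.
have bp : b \in p by rewrite hpe !inE eqxx orbT.
by have [[ha _ _] [hb _ _]] := (hok p hp a ap, hok p hp b bp).
Qed.

Lemma cur_draw_pair : cur d = Some a.
Proof. by []. Qed.

Lemma nxt_draw_pair : nxt d = Some b.
Proof. by rewrite /= hpe setU1K ?pick_set1 // inE (friend_neq hab). Qed.

Lemma invariant_draw_pair : invariant d.
Proof. by apply: invariant_draw; rewrite // hpe !inE eqxx. Qed.

Lemma first_pick_free : free s x.
Proof. exact: strat_free invariant_draw_pair cur_draw_pair. Qed.

Lemma after_first_pick v : free s v ->
  [/\ invariant (pick_step d v), cur (pick_step d v) = Some b,
      alloc (pick_step d v) a = Some v, alloc (pick_step d v) b = None
    & forall w, free (pick_step d v) w = free s w && (w != v)].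
Proof.
have [ha hb] := pair_unplaced.
move=> fv; split.
- exact: invariant_pick invariant_draw_pair cur_draw_pair fv.
- exact: nxt_draw_pair.
- by rewrite (alloc_pick _ _ cur_draw_pair) eqxx.
- by rewrite (alloc_pick _ _ cur_draw_pair) eq_sym (negbTE (friend_neq hab)).
- by move=> w; rewrite (free_pick _ _ cur_draw_pair ha).
Qed.

Lemma answer_free v : free s v -> free s (answer s p a v) && (answer s p a v != v).
Proof.
by move=> fv; have [h1 h2 _ _ h5] := after_first_pick fv; rewrite -h5; exact: strat_free h1 h2.
Qed.

Lemma answer_best v w : free s v -> free s w -> w != v ->
  (u b w)%:R + bonus (E w v) <= (u b (answer s p a v))%:R + bonus (E (answer s p a v) v).
Proof.
move=> fv fw wv; have [h1 h2 h3 _ h5] := after_first_pick fv.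
have hba : F b a by rewrite hFsym.
have fw1 : free (pick_step d v) w by rewrite h5 fw wv.
have [fy1 best] := hstrat (invariant_wf h1) h2 (invariant_free_plot h1 h2).
have := best w fw1; rewrite /expect.
by rewrite (eval_second_pick _ h1 h2 h3 hba fw1) (eval_second_pick _ h1 h2 h3 hba fy1).
Qed.

Lemma first_pick_best v : free s v ->
  (u a v)%:R + bonus (E v (answer s p a v)) <= (u a x)%:R + bonus (E x y).
Proof.
move=> fv; have [_ best] := hstrat (invariant_wf invariant_draw_pair) cur_draw_pair
  (invariant_free_plot invariant_draw_pair cur_draw_pair).
have := best v fv; rewrite /expect /fuel.
have e := eval_first_pick _ invariant_draw_pair cur_draw_pair nxt_draw_pair hab.
by rewrite (e _ _ fv) (e _ _ first_pick_free).
Qed.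

Lemma pair_round_outcome :
  ((exists2 v, free s v & u a v) -> u a x) /\
  (phi <= pair_gain a b x y \/ contested (free s) a b x).
Proof.
have fx := first_pick_free.
split; first exact: first_pick_valued first_pick_best.
have [v0 [w0 [h1 h2 h3 h4]]] : exists v0 w0, [/\ v0 != w0, E v0 w0, free s v0 & free s w0].
  by case/andP: hff => _ /existsP[v0 /existsP[w0 /and4P[]]]; exists v0, w0.
exact: pair_gain_alternative fx answer_free answer_best first_pick_best _ _ h1 h2 h3 h4.
Qed.

Lemma eval_after_pair k g : ev k.+2 d g = ev k (after_pair s p a) g.
Proof.
by rewrite (eval_cur _ _ cur_draw_pair) (eval_cur (s := pick_step d x) _ _ nxt_draw_pair).
Qed.

Lemma invariant_after_pair : invariant (after_pair s p a).
Proof.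
have [h1 h2 _ _ _] := after_first_pick first_pick_free.
exact: invariant_pick_strat h1 h2.
Qed.

Lemma alloc_after_pair k : alloc (after_pair s p a) k =
  if k == b then Some y else if k == a then Some x else alloc s k.
Proof.
have [_ h2 _ _ _] := after_first_pick first_pick_free.
by rewrite (alloc_pick _ _ h2) (alloc_pick _ _ cur_draw_pair).
Qed.

Lemma free_after_pair w : free (after_pair s p a) w = free s w && (w != x) && (w != y).
Proof.
have [_ h2 _ h4 h5] := after_first_pick first_pick_free.
by rewrite (free_pick _ _ h2 h4) h5.
Qed.

Lemma unplaced_after_pair : ((num_unplaced (after_pair s p a)).+2 <= num_unplaced s)%N.
Proof.
rewrite /num_unplaced.
have [ha hb] := pair_unplaced.
pose S := [set k | alloc s k == None].
have sub2 : [set k | alloc (after_pair s p a) k == None] \subset S :\ a :\ b.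
  apply/subsetP => k; rewrite !inE alloc_after_pair.
  by case: (eqVneq k b) => //= kb; case: (eqVneq k a) => //= ka; rewrite kb ka.
have e1 : #|S| = (#|S :\ a :\ b|).+2.
  by rewrite (cardsD1 a S) (cardsD1 b (S :\ a)) !inE ha hb eqxx eq_sym friend_neq.
by rewrite -/S e1 ltnS; exact: subset_leq_card sub2.
Qed.

Lemma secured_after_pair :
  secured_welfare (alloc s) + pair_gain a b x y <= secured_welfare (alloc (after_pair s p a)).
Proof.
have [ha hb] := pair_unplaced; have ab := friend_neq hab.
have hsub : sub_alloc (alloc s) (alloc (after_pair s p a)).
  move=> k v hk; rewrite alloc_after_pair.
  case: (eqVneq k b) => [e|_]; first by rewrite e hb in hk.
  by case: (eqVneq k a) => [e|//]; rewrite e ha in hk.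
apply: le_trans (secured_welfare_grow hsub); rewrite lerD2l.
rewrite (bigD1 a) /=; last by rewrite ha.
rewrite (bigD1 b) /=; last by rewrite hb eq_sym ab.
have ea : alloc (after_pair s p a) a = Some x by rewrite alloc_after_pair (negbTE ab) eqxx.
have eb : alloc (after_pair s p a) b = Some y by rewrite alloc_after_pair eqxx.
rewrite (secured_friend hab ea eb) (secured_friend _ eb ea) 1?hFsym //.
have : 0 <= \sum_(i | (alloc s i == None) && (i != a) && (i != b))
  secured (alloc (after_pair s p a)) i by apply: sumr_ge0 => *; exact: secured_ge0.
by rewrite /pair_gain; lra.
Qed.

Lemma value_capacity_after_pair m : (forall A : {ffun N -> V}, injective A ->
    (#|[set k in [set a; b] | valued_free s A k && (A k \notin [set x; y])]| <= m)%N) ->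
  (value_capacity s <= value_capacity (after_pair s p a) + m + 2)%N.
Proof.
move=> hm; apply: leq_trans (value_capacity_drop (s' := after_pair s p a) _ _ hm) _.
- move=> k; rewrite !inE negb_or => /andP[ka kb].
  by rewrite alloc_after_pair (negbTE ka) (negbTE kb).
- by move=> v; rewrite !inE negb_or => /andP[vx vy] fv; rewrite free_after_pair fv vx vy.
- by rewrite leq_add2l cards2; case: (x != y).
Qed.

Lemma friend_capacity_after_pair :
  (friend_capacity s <= friend_capacity (after_pair s p a) + has_free_nb s x + 1)%N.
Proof.
have hP : #|pairs s| = (#|pairs (after_pair s p a)|).+1 by rewrite (cardsD1 p (pairs s)) hp.
have := matching_number_drop free_after_pair; have := leq_b1 (has_free_nb s y).
rewrite /friend_capacity hP.
move: (nat_of_bool _) (nat_of_bool _) (matching_number _) (matching_number _) => h1 h2 n1 n2.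
lia.
Qed.

Lemma capacity_drop_pair :
  (value_capacity s <= value_capacity (after_pair s p a) + 4)%N /\
  (friend_capacity s <= friend_capacity (after_pair s p a) + 2)%N.
Proof.
split; last by have := friend_capacity_after_pair; have := leq_b1 (has_free_nb s x); lia.
rewrite -[4%N]/(2 + 2)%N addnA; apply: value_capacity_after_pair => A _.
apply: leq_trans (_ : _ <= #|[set a; b]|)%N _; last by rewrite cards2; case: (a != b).
by apply: subset_leq_card; apply/subsetP => k; rewrite inE => /andP[].
Qed.

Lemma capacity_drop_pair_contested :
  (forall w, free s w -> u a w -> w = x) -> (forall w, free s w -> u b w -> w = x) ->
  (forall w, free s w -> w != x -> ~~ E x w) ->
  (value_capacity s <= value_capacity (after_pair s p a) + 2)%N /\
  (friend_capacity s <= friend_capacity (after_pair s p a) + 1)%N.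
Proof.
move=> ha hb hn; split.
  apply: leq_trans (value_capacity_after_pair (m := 0%N) _) _; rewrite ?addn0 // => A _.
  rewrite leqn0 cards_eq0; apply/eqP/setP => k.
  rewrite in_set0 inE; apply/negbTE/negP => /andP[hk /andP[/andP[/andP[_ hf] hu] hw]].
  move: hw; rewrite !inE negb_or => /andP[hwx _].
  by move: hk; rewrite !inE => /orP[] /eqP ek; subst k;
    [rewrite (ha _ hf hu) eqxx in hwx | rewrite (hb _ hf hu) eqxx in hwx].
have hx0 : has_free_nb s x = false.
  by apply/negbTE/existsP => -[w /and3P[wx exw fw]]; have := hn w fw wx; rewrite exw.
by have := friend_capacity_after_pair; rewrite hx0 addn0.
Qed.

End PairRound.

Definition coef : R := phi / (4 * phi + 4).

Definition capacity (s : st) : R :=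
  (value_capacity s)%:R + 2 * phi * (friend_capacity s)%:R.

Definition potential (s : st) : R := secured_welfare (alloc s) + coef * capacity s.

Lemma coef_ge0 : 0 <= coef.
Proof. by rewrite divr_ge0 //; have := hphi0; lra. Qed.

Lemma coef_capacity_drop (s s' : st) (dU dF : nat) :
  (value_capacity s <= value_capacity s' + dU)%N ->
  (friend_capacity s <= friend_capacity s' + dF)%N ->
  coef * capacity s <= coef * capacity s' + coef * (dU%:R + 2 * phi * dF%:R).
Proof.
rewrite -!(ler_nat R) !natrD => hU hF; rewrite -mulrDr; apply: ler_wpM2l; first exact: coef_ge0.
have : 2 * phi * (friend_capacity s)%:R <= 2 * phi * ((friend_capacity s')%:R + dF%:R).
  by apply: ler_wpM2l => //; have := hphi0; lra.
by rewrite /capacity; lra.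
Qed.

Lemma coef_pair_drop : coef * ((4%N)%:R + 2 * phi * (2%N)%:R) = phi.
Proof. by rewrite /coef; field; have := hphi0; lra. Qed.

Lemma coef_contested_drop : coef * ((2%N)%:R + 2 * phi * (1%N)%:R) = phi / 2.
Proof. by rewrite /coef; field; have := hphi0; lra. Qed.

Lemma coef_rsd_drop : coef * (2%N)%:R <= 1.
Proof.
rewrite /coef mulrAC ler_pdivrMr; first by have := hphi0; have := hphi1; lra.
by have := hphi0; lra.
Qed.

(* If [a]'s pick is contested, [b] values that plot and grabs it when first. *)
Lemma potential_pair_contested s p a b : pair_turn s p a b ->
  contested (free s) a b (first_pick s p a) ->
  2 * potential s <= potential (after_pair s p a) + potential (after_pair s p b).
Proof.
move=> hT; have hT' := pair_turn_sym hT.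
set x := first_pick s p a; move=> [na ubx hbx hnx].
have [C1 _] := pair_round_outcome hT'.
have ubx' := C1 (ex_intro2 _ _ x (first_pick_free hT) ubx).
have xx : first_pick s p b = x by apply: hbx ubx'; exact: first_pick_free hT'.
have nova w : free s w -> u a w -> w = x by move=> fw uaw; have := na w fw; rewrite uaw.
have [d2u d2f] := capacity_drop_pair_contested hT nova hbx hnx.
have [d3u d3f] : (value_capacity s <= value_capacity (after_pair s p b) + 2)%N /\
                 (friend_capacity s <= friend_capacity (after_pair s p b) + 1)%N.
  by apply: (capacity_drop_pair_contested hT'); rewrite xx.
have d2 := coef_capacity_drop d2u d2f; have d3 := coef_capacity_drop d3u d3f.
rewrite coef_contested_drop in d2 d3.
apply: ler_pair_average (secured_after_pair hT) (secured_after_pair hT') d2 d3 _.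
have gA := pair_gain_ge0 a b x (answer s p a x).
have gB := pair_gain_ge_first b a (first_pick s p b) (answer s p b (first_pick s p b)).
have hB := bonus_ge0 (E (first_pick s p b) (answer s p b (first_pick s p b))).
rewrite ubx' mulr1n in gB; have hphi := hphi1.
by lra.
Qed.

Lemma potential_pair_round s p a b : pair_turn s p a b ->
  2 * potential s <= potential (after_pair s p a) + potential (after_pair s p b).
Proof.
move=> hT; have hT' := pair_turn_sym hT.
have [_ [gA|contA]] := pair_round_outcome hT; last exact: potential_pair_contested hT contA.
have [_ [gB|contB]] := pair_round_outcome hT'; last first.
  by rewrite addrC; exact: potential_pair_contested hT' contB.
have [d2u d2f] := capacity_drop_pair hT; have [d3u d3f] := capacity_drop_pair hT'.
have d2 := coef_capacity_drop d2u d2f; have d3 := coef_capacity_drop d3u d3f.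
rewrite coef_pair_drop in d2 d3.
apply: ler_pair_average (secured_after_pair hT) (secured_after_pair hT') d2 d3 _.
by lra.
Qed.

Lemma potential_draw s p a b (k : nat) : pair_turn s p a b ->
  (forall s' : st, invariant s' -> cur s' = None ->
     ((num_unplaced s').+2 <= num_unplaced s)%N ->
     potential s' <= ev k s' SW) ->
  potential s <= (#|p|%:R)^-1 * \sum_(i in p) ev k.+2 (draw_step s p i) SW.
Proof.
move=> hT IH; have hT' := pair_turn_sym hT; have ab := friend_neq (turn_friends hT).
have -> : #|p| = 2%N by rewrite (turn_pair hT) cards2 ab.
rewrite {1}(turn_pair hT) big_setU1 ?inE // big_set1.
rewrite (eval_after_pair hT) (eval_after_pair hT').
have P2 := IH _ (invariant_after_pair hT) erefl (unplaced_after_pair hT).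
have P3 := IH _ (invariant_after_pair hT') erefl (unplaced_after_pair hT').
exact: ler_mean2 (potential_pair_round hT) P2 P3.
Qed.

Lemma rsd_pick_valued (s : st) i : invariant s -> cur s = None -> ~~ ff_cond E s ->
  i \in rsd_set u s -> u i (strat (rsd_draw s i)).
Proof.
move=> hI hc hff hi; have hIt := invariant_rsd hI hc hff hi.
have ct : cur (rsd_draw s i) = Some i by [].
have [v fv uiv] : exists2 v, free s v & u i v.
  by move: hi; rewrite inE => /andP[_ /existsP[v /andP[fv uiv]]]; exists v.
have [_ best] := hstrat (invariant_wf hIt) ct (invariant_free_plot hIt ct).
have := best v fv; rewrite /expect.
set x := strat (rsd_draw s i).
have /andP[lo _] : 1 <= ev (fuel N) (pick_step (rsd_draw s i) v) (Ut i) <= 1 + phi.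
  apply: eval_bounds; first exact: invariant_pick hIt ct fv.
  move=> A _ hext; have hA : A i = v by apply: hext; rewrite (alloc_pick _ _ ct) eqxx.
  by have := utility_ge i A; have := utility_le i A; rewrite hA uiv mulr1n => -> ->.
have /andP[_ hi'] : 0 <= ev (fuel N) (pick_step (rsd_draw s i) x) (Ut i) <= (u i x)%:R + phi.
  apply: eval_bounds; first exact: invariant_pick_strat hIt ct.
  move=> A _ hext; have hA : A i = x by apply: hext; rewrite (alloc_pick _ _ ct) eqxx.
  have := utility_ge i A; have := utility_le i A; rewrite hA => -> h.
  by rewrite (le_trans _ h) ?ler0n.
move=> h; apply/negPn/negP => /negbTE ux; move: hi'; rewrite ux mulr0n.
by have := hphi1; lra.
Qed.

Definition after_rsd (s : st) (i : N) : st := pick_step (rsd_draw s i) (strat (rsd_draw s i)).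

Lemma alloc_after_rsd (s : st) i k :
  alloc (after_rsd s i) k = if k == i then Some (strat (rsd_draw s i)) else alloc s k.
Proof. exact: alloc_pick. Qed.

Lemma unplaced_after_rsd (s : st) i : alloc s i = None ->
  ((num_unplaced (after_rsd s i)).+1 <= num_unplaced s)%N.
Proof.
move=> hi0; pose S := [set k | alloc s k == None].
have sub : [set k | alloc (after_rsd s i) k == None] \subset S :\ i.
  by apply/subsetP => k; rewrite !inE alloc_after_rsd; case: (eqVneq k i).
have e1 : #|S| = (#|S :\ i|).+1 by rewrite (cardsD1 i S) !inE hi0.
by rewrite /num_unplaced -/S e1 ltnS; exact: subset_leq_card sub.
Qed.

Lemma value_capacity_after_rsd (s : st) i : alloc s i = None ->
  (value_capacity s <= value_capacity (after_rsd s i) + 2)%N.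
Proof.
move=> hi0; have -> : 2%N = (1 + #|[set strat (rsd_draw s i)]|)%N by rewrite cards1.
rewrite addnA; apply: (value_capacity_drop (s' := after_rsd s i) (X := [set i])).
- by move=> k; rewrite inE => ki; rewrite alloc_after_rsd (negbTE ki).
- by move=> v; rewrite inE => vx fv; rewrite (free_pick (s := rsd_draw s i) _ _ erefl hi0) vx andbT.
- move=> A _; apply: leq_trans (_ : _ <= #|[set i]|)%N _; last by rewrite cards1.
  by apply: subset_leq_card; apply/subsetP => k; rewrite inE => /andP[].
Qed.

Lemma potential_rsd (s : st) i : invariant s -> cur s = None -> ~~ ff_cond E s ->
  i \in rsd_set u s -> potential s <= potential (after_rsd s i).
Proof.
move=> hI hc hff hi; have hi0 : alloc s i = None by move: hi; rewrite inE => /andP[/eqP].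
have hsub : sub_alloc (alloc s) (alloc (after_rsd s i)).
  by move=> k v hk; rewrite alloc_after_rsd; case: (eqVneq k i) => // e; rewrite e hi0 in hk.
have hG := secured_welfare_grow hsub.
have hGi : 1 <= \sum_(k | alloc s k == None) secured (alloc (after_rsd s i)) k.
  rewrite (bigD1 i) /=; last by rewrite hi0.
  have hx : alloc (after_rsd s i) i = Some (strat (rsd_draw s i)) by rewrite alloc_after_rsd eqxx.
  have := secured_ge_value hx; rewrite (rsd_pick_valued hI hc hff hi) mulr1n => h1.
  have : 0 <= \sum_(k | (alloc s k == None) && (k != i)) secured (alloc (after_rsd s i)) k.
    by apply: sumr_ge0 => *; exact: secured_ge0.
  by move: h1; lra.
have hF : (friend_capacity s <= friend_capacity (after_rsd s i) + 0)%N.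
  by rewrite friend_capacity0.
have d := coef_capacity_drop (value_capacity_after_rsd hi0) hF; rewrite mulr0 addr0 in d.
have := coef_rsd_drop.
by rewrite /potential; move: hG hGi d; lra.
Qed.

Lemma all_placed_no_ff (s : st) : invariant s -> num_unplaced s = 0%N -> ~~ ff_cond E s.
Proof.
move=> hI /eqP; rewrite cards_eq0 => /eqP hall.
apply/negP => /andP[/set0Pn[p hp] hex].
have hok := invariant_pairs_unplaced hI hex.
have [a [b [_ _ e]]] := friend_pairsP (invariant_pairs hI hp).
have ap : a \in p by rewrite e !inE eqxx.
have [ha _ _] := hok p hp a ap.
have : a \in [set k | alloc s k == None] by rewrite inE ha.
by rewrite hall inE.
Qed.

Lemma all_placed_rsd0 (s : st) : num_unplaced s = 0%N -> rsd_set u s = set0.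
Proof.
move=> /eqP; rewrite cards_eq0 => /eqP h; apply/setP => i; rewrite in_set0 inE.
apply/negbTE/negP => /andP[hi _].
have : i \in [set k | alloc s k == None] by rewrite inE.
by rewrite h inE.
Qed.

Lemma potential_final (s : st) : invariant s -> rsd_set u s = set0 -> ~~ ff_cond E s ->
  potential s <= SW (compl s).
Proof.
move=> hI hr hff.
rewrite /potential /capacity (value_capacity0 hr) (friend_capacity0 hff).
rewrite !(mulr0n, mulr0, addr0).
by have [_ h2] := hcompl (invariant_partial_inj hI); exact: secured_welfare_le_SW.
Qed.

Lemma potential_le_eval (m : nat) (s : st) : invariant s -> cur s = None ->
  (2 * num_unplaced s <= m)%N -> potential s <= ev m s SW.
Proof.
elim/ltn_ind: m s => -[|m] IH s hI hc hm.
  have h0 : num_unplaced s = 0%N by lia.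
  exact: potential_final hI (all_placed_rsd0 h0) (all_placed_no_ff hI h0).
rewrite /= hc; case hff: (ff_cond E s).
  apply: avg_ge; first by case/andP: hff.
  move=> p hp; have [a [b [hab _ hpe]]] := friend_pairsP (invariant_pairs hI hp).
  have hT : pair_turn s p a b by [].
  have := unplaced_after_pair hT; case: m IH hm => [|[|k]] IH hm hun; try lia.
  apply: potential_draw hT _ => s' hI' hc' hun'.
  by apply: IH hI' hc' _; lia.
case: ifP => hr; first exact: potential_final hI (eqP hr) (negbT hff).
apply: avg_ge; first by rewrite hr.
move=> i hi; have hpot := potential_rsd hI hc (negbT hff) hi.
have hi0 : alloc s i = None by move: hi; rewrite inE => /andP[/eqP].
have hI3 := invariant_pick_strat (invariant_rsd hI hc (negbT hff) hi) erefl.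
have hun := unplaced_after_rsd hi0.
case: m IH hm => [|k] IH hm; first by lia.
rewrite (eval_cur _ _ (erefl : cur (rsd_draw s i) = Some i)).
by apply: le_trans hpot (IH k _ (after_rsd s i) hI3 erefl _); lia.
Qed.

Section OptimumBound.
Variables (A : {ffun N -> V}) (lt : rel N).
Hypotheses (hA : injective A) (lt_asym : forall i j, lt i j -> ~~ lt j i).

Definition realized : {set N * N} := [set x | F x.1 x.2 && E (A x.1) (A x.2) && lt x.1 x.2].

Let pair_of (x : N * N) : {set N} := [set x.1; x.2].

Lemma realized_friend_pair x : x \in realized -> pair_of x \in friend_pairs.
Proof. by rewrite inE => /andP[/andP[hx _] _]; apply/imsetP; exists x; rewrite ?inE. Qed.

Lemma realized_pair_inj : {in realized &, injective pair_of}.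
Proof.
move=> [i j] [k l]; rewrite !inE /= => /andP[/andP[hij _] lij] /andP[/andP[hkl _] lkl] e.
have : i \in [set k; l] by rewrite -[[set k; l]]/(pair_of (k, l)) -e !inE eqxx.
have : j \in [set k; l] by rewrite -[[set k; l]]/(pair_of (k, l)) -e !inE eqxx orbT.
rewrite !inE => /orP[]/eqP hj /orP[]/eqP hi; subst => //.
- by rewrite hFirr in hij.
- by move: (lt_asym lij); rewrite lkl.
- by rewrite hFirr in hij.
Qed.

Lemma card_realized_pairs : (#|realized| <= #|friend_pairs|)%N.
Proof.
rewrite -(card_in_imset realized_pair_inj); apply: subset_leq_card; apply/subsetP => e.
by case/imsetP => x hx ->; exact: realized_friend_pair.
Qed.

Lemma card_realized_matching : (#|realized| <= matching_number (init_state V F))%N.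
Proof.
pose g x := [set A y | y in pair_of x].
have ginj : {in realized &, injective g}.
  by move=> x y hx hy e; apply: realized_pair_inj => //; exact: (imset_inj hA).
have hfree v : free (init_state V F) v by apply/forallP => k; rewrite /= ffunE.
rewrite -(card_in_imset ginj); apply: leq_bigmax_cond; apply/andP; split.
  apply/forall_inP => e /imsetP[[i j] hx ->].
  move: (hx); rewrite inE /= => /andP[/andP[hij hE] _].
  apply/existsP; exists (A i); apply/existsP; exists (A j).
  by rewrite (inj_eq hA) friend_neq //= hE !hfree /g /pair_of /= imsetU1 imset_set1.
apply/forall_inP => e1 /imsetP[x hx ->]; apply/forall_inP => e2 /imsetP[y hy ->].
apply/implyP => ne; rewrite -setI_eq0; apply/eqP/setP => z; rewrite in_set0 inE.
apply/negbTE/negP => /andP[/imsetP[k1 k1x ->] /imsetP[k2 k2y /hA e12]]; subst k2.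
have := friend_pairs_disj (realized_friend_pair hx) (realized_friend_pair hy) k1x k2y.
by move=> hfe; rewrite /g hfe eqxx in ne.
Qed.

End OptimumBound.

Lemma card_friend_edges (A : {ffun N -> V}) : injective A ->
  (#|(fun x : N * N => F x.1 x.2 && E (A x.1) (A x.2))| <=
   2 * friend_capacity (init_state V F))%N.
Proof.
move=> hA; pose lt1 := [rel i j : N | enum_rank i < enum_rank j]%N.
pose lt2 := [rel i j : N | lt1 j i].
have asym1 i j : lt1 i j -> ~~ lt1 j i by rewrite /= -leqNgt; exact: ltnW.
have asym2 i j : lt2 i j -> ~~ lt2 j i by rewrite /= -leqNgt; exact: ltnW.
apply: leq_trans (_ : _ <= #|realized A lt1 :|: realized A lt2|)%N _.
  apply: subset_leq_card; apply/subsetP => x hx; have /andP[hF hE] : _ && _ := hx.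
  rewrite in_setU !inE hF hE /=.
  have : enum_rank x.1 != enum_rank x.2 by rewrite (inj_eq enum_rank_inj) friend_neq.
  by rewrite neq_ltn.
apply: leq_trans (leq_card_setU _ _) _.
have := card_realized_pairs A asym1; have := card_realized_pairs A asym2.
have := card_realized_matching hA asym1; have := card_realized_matching hA asym2.
rewrite /friend_capacity /friend_pairs.
move: (#|realized _ _|) (#|realized _ _|) (#|pairs _|) (matching_number _) => n1 n2 P M.
lia.
Qed.

Lemma OPT_le_capacity : OPT E u F phi <= capacity (init_state V F).
Proof.
have hphi := hphi0.
have hQ : 0 <= capacity (init_state V F) by rewrite /capacity addr_ge0 ?mulr_ge0 //; lra.
rewrite /OPT; apply: bigmax_le => // A /injectiveP hA.
rewrite /SW /utility big_split /= natr_sum_bool.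
have hc : (#|[set i | u i (A i)]| <= value_capacity (init_state V F))%N.
  apply: leq_trans (leq_bigmax_cond A _); last by apply/injectiveP.
  apply: subset_leq_card; apply/subsetP => k; rewrite !inE => hk.
  by rewrite /valued_free /= ffunE eqxx hk andbT; apply/forallP => j; rewrite ffunE.
rewrite (pair_big_dep xpredT (fun i j => F i j && E (A i) (A j)) (fun _ _ => phi)) /=.
rewrite sumr_const -[phi *+ _]mulr_natr /capacity.
have := card_friend_edges hA; rewrite -(ler_nat R) natrM => /(ler_wpM2l (ltW hphi)).
by rewrite -(ler_nat R) in hc; lra.
Qed.

Lemma potential_init : potential (init_state V F) = coef * capacity (init_state V F).
Proof. by rewrite /potential /secured_welfare big1 ?add0r // => k _; rewrite /secured ffunE. Qed.

Lemma expected_welfare_ge :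
  coef * OPT E u F phi <= expect E u compl strat (init_state V F) SW.
Proof.
have hfuel : (2 * num_unplaced (init_state V F) <= fuel N)%N.
  by rewrite /fuel /num_unplaced; have := max_card [set k | alloc (init_state V F) k == None]; lia.
apply: le_trans (potential_le_eval invariant_init erefl hfuel).
by rewrite potential_init ler_wpM2l ?coef_ge0 ?OPT_le_capacity.
Qed.

End FFCTRSD.

Theorem theoremA1 (R : realFieldType) (N V : finType)
    (E : rel V) (u : N -> V -> bool) (F : rel N) (phi : R)
    (hNV : #|N| = #|V|)
    (hEsym : symmetric E)
    (hFsym : symmetric F) (hFirr : irreflexive F)
    (hdeg : forall i : N, (#|[set j | F i j]| <= 1)%N)
    (hdeg1 : exists i j : N, F i j)
    (hphi0 : 0 < phi) (hphi1 : phi < 1)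
    (compl : state N V -> {ffun N -> V})
    (hcompl : valid_completion compl)
    (strat : state N V -> V)
    (hstrat : spe E u F phi compl strat) :
  phi / (4 * phi + 4) * OPT E u F phi <=
    expect E u compl strat (init_state V F) (SW E u F phi).
Proof.
exact: expected_welfare_ge.
Qed.
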